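(* Fix a UL-chain $\mathbf{A}$ and a predicate language $\mathcal{P}$, and let $\mathscr{K}$ be a class of $\mathbf{A}$-structures for $\mathcal{P}$. If $\mathscr{K}$ satisfies the hereditary property (HP) and the joint embedding property (JEP) and is closed under unions of chains, then there is an $\mathbf{A}$-structure $\langle\mathbf{A},\mathbf{N}\rangle$ such that $\mathscr{K}=\{\langle\mathbf{A},\mathbf{M}\rangle \mid \mathrm{Age}(\mathbf{A},\mathbf{M})\subseteq \mathrm{Age}(\mathbf{A},\mathbf{N})\}$.
   Context: A UL-algebra is a structure $\mathbf{A}=\langle A,\wedge,\vee,\&,\to,\bar 0,\bar 1,\bot,\top\rangle$ such that $\langle A,\wedge,\vee,\bot,\top\rangle$ is a bounded lattice, $\langle A,\&,\bar 1\rangle$ is a commutative monoid, $a\& b\le c$ iff $b\le a\to c$, and $((a\to b)\wedge\bar 1)\vee((b\to a)\wedge \bar 1)=\bar 1$. A UL-chain is a UL-algebra with linear lattice order. An $\mathbf{A}$-structure $\langle\mathbf{A},\mathbf{M}\rangle$ for a predicate language $\mathcal{P}$ consists of a set $M$, a function $P_{\mathbf{M}}:M^n\to A$ for each $n$-ary predicate symbol $P$, and a function $F_{\mathbf{M}}:M^n\to M$ for each $n$-ary function symbol $F$; quantifier-free formulas (with connectives $\wedge,\vee,\&,\to,\bar0,\bar1,\bot,\top$) receive values in $A$ by evaluating terms as usual, atomic formulas via $P_{\mathbf{M}}$, and connectives via the operations of $\mathbf{A}$. A substructure of $\langle\mathbf{A},\mathbf{N}\rangle$ is $\langle\mathbf{A},\mathbf{M}\rangle$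 with $M\subseteq N$, agreeing on function symbols, and giving every quantifier-free formula the same value on tuples from $M$. An embedding is an injective map between universes commuting with function symbols and preserving values of all quantifier-free formulas (identity on $\mathbf{A}$); isomorphism = surjective embedding. Finitely generated means generated by a finite subset under the function symbols. A chain is a sequence of structures each a substructure of the later ones; its union is the structure on the union of universes with inherited interpretations. $\mathrm{Age}(\mathbf{A},\mathbf{N})$ is the class (up to isomorphism) of finitely generated substructures of $\langle\mathbf{A},\mathbf{N}\rangle$ and their isomorphic copies. HP: closed under substructures. JEP: any two members embed into a common member of the class. *)

From Stdlib Require Import List Fin.

Set Implicit Arguments.
Unset Strict Implicit.

Record ULAlgebra := {
  ul_car :> Type;
  ul_meet : ul_car -> ul_car -> ul_car;
  ul_join : ul_car -> ul_car -> ul_car;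
  ul_conj : ul_car -> ul_car -> ul_car;
  ul_impl : ul_car -> ul_car -> ul_car;
  ul_zero : ul_car;
  ul_one  : ul_car;
  ul_bot  : ul_car;
  ul_top  : ul_car;
  ul_meetA : forall a b c, ul_meet a (ul_meet b c) = ul_meet (ul_meet a b) c;
  ul_joinA : forall a b c, ul_join a (ul_join b c) = ul_join (ul_join a b) c;
  ul_meetC : forall a b, ul_meet a b = ul_meet b a;
  ul_joinC : forall a b, ul_join a b = ul_join b a;
  ul_meetK : forall a b, ul_meet a (ul_join a b) = a;
  ul_joinK : forall a b, ul_join a (ul_meet a b) = a;
  ul_meet_bot : forall a, ul_meet ul_bot a = ul_bot;
  ul_meet_top : forall a, ul_meet a ul_top = a;
  ul_conjA : forall a b c, ul_conj a (ul_conj b c) = ul_conj (ul_conj a b) c;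
  ul_conjC : forall a b, ul_conj a b = ul_conj b a;
  ul_conj1 : forall a, ul_conj ul_one a = a;
  (* residuation, with a <= b  :=  a /\ b = a *)
  ul_resid : forall a b c,
      ul_meet (ul_conj a b) c = ul_conj a b <-> ul_meet b (ul_impl a c) = b;
  ul_prelin : forall a b,
      ul_join (ul_meet (ul_impl a b) ul_one) (ul_meet (ul_impl b a) ul_one) = ul_one
}.

Definition ul_le (A : ULAlgebra) (a b : A) : Prop := @ul_meet A a b = a.

Definition UL_chain (A : ULAlgebra) : Prop := forall a b : A, @ul_le A a b \/ @ul_le A b a.

Record Language := {
  Fsym : Type;
  farity : Fsym -> nat;
  Psym : Type;
  parity : Psym -> nat
}.

Inductive term (L : Language) : Type :=
| tvar : nat -> term L
| tapp : forall f : Fsym L, (Fin.t (farity f) -> term L) -> term L.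
Arguments tvar {L} _.
Arguments tapp {L} f _.

Inductive qfform (L : Language) : Type :=
| fatom : forall P : Psym L, (Fin.t (parity P) -> term L) -> qfform L
| fmeet : qfform L -> qfform L -> qfform L
| fjoin : qfform L -> qfform L -> qfform L
| fconj : qfform L -> qfform L -> qfform L
| fimpl : qfform L -> qfform L -> qfform L
| fzero : qfform L
| fone  : qfform L
| fbot  : qfform L
| ftop  : qfform L.
Arguments fatom {L} P _.

Record AStr (L : Language) (A : ULAlgebra) (M : Type) := {
  funI  : forall f : Fsym L, (Fin.t (farity f) -> M) -> M;
  predI : forall P : Psym L, (Fin.t (parity P) -> M) -> A
}.
Arguments funI {L A M} a f _.
Arguments predI {L A M} a P _.
Arguments Build_AStr {L A M} _ _.

Fixpoint tval (L : Language) (A : ULAlgebra) (M : Type) (S : AStr L A M)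
  (v : nat -> M) (t : term L) : M :=
  match t with
  | tvar n => v n
  | tapp f args => funI S f (fun i => tval S v (args i))
  end.

Fixpoint fval (L : Language) (A : ULAlgebra) (M : Type) (S : AStr L A M)
  (v : nat -> M) (phi : qfform L) : A :=
  match phi with
  | fatom P args => predI S P (fun i => tval S v (args i))
  | fmeet p q => @ul_meet A (fval S v p) (fval S v q)
  | fjoin p q => @ul_join A (fval S v p) (fval S v q)
  | fconj p q => @ul_conj A (fval S v p) (fval S v q)
  | fimpl p q => @ul_impl A (fval S v p) (fval S v q)
  | fzero _ => @ul_zero A
  | fone _ => @ul_one A
  | fbot _ => @ul_bot A
  | ftop _ => @ul_top A
  end.

Definition embedding (L : Language) (A : ULAlgebra) (M N : Type)
  (SM : AStr L A M) (SN : AStr L A N) (e : M -> N) : Prop :=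
  (forall x y, e x = e y -> x = y) /\
  (forall f args, e (funI SM f args) = funI SN f (fun i => e (args i))) /\
  (forall (phi : qfform L) (v : nat -> M), fval SM v phi = fval SN (fun n => e (v n)) phi).

Definition isomorphic (L : Language) (A : ULAlgebra) (M N : Type)
  (SM : AStr L A M) (SN : AStr L A N) : Prop :=
  exists e : M -> N, embedding SM SN e /\ (forall y, exists x, e x = y).

Definition fclosed (L : Language) (A : ULAlgebra) (N : Type) (SN : AStr L A N)
  (X : N -> Prop) : Prop :=
  forall f args, (forall i, X (args i)) -> X (funI SN f args).

Definition subS (L : Language) (A : ULAlgebra) (N : Type) (SN : AStr L A N)
  (X : N -> Prop) (HX : fclosed SN X) : AStr L A {x : N | X x} :=
  {| funI := fun f args =>
       exist X (funI SN f (fun i => proj1_sig (args i)))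
             (HX f (fun i => proj1_sig (args i)) (fun i => proj2_sig (args i)));
     predI := fun P args => predI SN P (fun i => proj1_sig (args i)) |}.
Arguments subS {L A N} SN X HX.

Inductive generated (L : Language) (A : ULAlgebra) (M : Type) (S : AStr L A M)
  (l : list M) : M -> Prop :=
| gen_base : forall x, In x l -> generated S l x
| gen_app : forall f args, (forall i, generated S l (args i)) ->
    generated S l (funI S f args).

Definition fin_generated (L : Language) (A : ULAlgebra) (M : Type) (S : AStr L A M) : Prop :=
  exists l : list M, forall x, generated S l x.

Definition inAge (L : Language) (A : ULAlgebra) (N : Type) (SN : AStr L A N)
  (B : Type) (SB : AStr L A B) : Prop :=
  exists (X : N -> Prop) (HX : fclosed SN X),
    fin_generated (subS SN X HX) /\ isomorphic SB (subS SN X HX).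

Definition age_sub (L : Language) (A : ULAlgebra) (M N : Type)
  (SM : AStr L A M) (SN : AStr L A N) : Prop :=
  forall (B : Type) (SB : AStr L A B), inAge SM SB -> inAge SN SB.

Definition StrClass (L : Language) (A : ULAlgebra) := forall M : Type, AStr L A M -> Prop.

Definition iso_closed (L : Language) (A : ULAlgebra) (K : StrClass L A) : Prop :=
  forall (M N : Type) (SM : AStr L A M) (SN : AStr L A N),
    isomorphic SM SN -> K M SM -> K N SN.

Definition HP (L : Language) (A : ULAlgebra) (K : StrClass L A) : Prop :=
  forall (N : Type) (SN : AStr L A N) (X : N -> Prop) (HX : fclosed SN X),
    K N SN -> K _ (subS SN X HX).

Definition JEP (L : Language) (A : ULAlgebra) (K : StrClass L A) : Prop :=
  forall (M1 M2 : Type) (S1 : AStr L A M1) (S2 : AStr L A M2),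
    K M1 S1 -> K M2 S2 ->
    exists (M : Type) (S : AStr L A M) (e1 : M1 -> M) (e2 : M2 -> M),
      K M S /\ embedding S1 S e1 /\ embedding S2 S e2.

(** A chain is a nonempty family of
    substructures (X i) of the union structure SU, linearly ordered by
    inclusion (each a substructure of the later ones), whose universes cover U;
    SU is then exactly the union of the chain (interpretations inherited). *)
Definition union_closed (L : Language) (A : ULAlgebra) (K : StrClass L A) : Prop :=
  forall (U : Type) (SU : AStr L A U) (I : Type) (X : I -> U -> Prop)
         (HX : forall i, fclosed SU (X i)),
    inhabited I ->
    (forall i j, (forall u, X i u -> X j u) \/ (forall u, X j u -> X i u)) ->
    (forall u, exists i, X i u) ->
    (forall i, K _ (subS SU (X i) (HX i))) ->
    K U SU.

(* If all finitely generated substructures of M are in K, then M is in K: a property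
   of sets that holds for finite sets and is preserved by unions of nonempty chains
   holds for every set, by induction on cardinality (an infinite set is the union of
   the chain of its proper initial segments in a well-order of minimal type), and
   generating substructures turns a chain of sets into a chain of substructures.

   Conversely, Zorn's lemma yields a member N of K into which every finitely generated
   member of K embeds: unions of chains stay in K, and a member missing some finitely
   generated B is enlarged by applying JEP to it and B, then HP.  Then K M gives
   Age(M) <= Age(N), since a finitely generated substructure of M is in K by HP and
   embeds into N; and Age(M) <= Age(N) gives K M by the first paragraph, each finitely
   generated substructure of M being isomorphic to one of N.  To keep Zorn's lemma
   inside a set, the candidates live on sets of terms whose variables are elements of
   representatives of the finitely generated members of K. *)

From Stdlib Require Import List Arith Lia FinFun Classical ClassicalEpsilon ProofIrrelevance
  FunctionalExtensionality PropExtensionality Eqdep.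
From mathcomp Require ssreflect ssrbool eqtype boolp wochoice classical_sets.

Definition strict_well_order {W : Type} (lt : W -> W -> Prop) : Prop :=
  well_founded lt /\ (forall x y z, lt x y -> lt y z -> lt x z) /\
  (forall x y, lt x y \/ x = y \/ lt y x) /\ (forall x, ~ lt x x).

Module ChoicePrinciples.
Import ssreflect ssrbool eqtype boolp wochoice classical_sets.

Lemma zorn_preorder (T : Type) (t0 : T) (R : T -> T -> Prop) :
  (forall t, R t t) -> (forall r s t, R r s -> R s t -> R r t) ->
  (forall C : T -> Prop, (forall s t, C s -> C t -> R s t \/ R t s) ->
     exists u, forall s, C s -> R s u) ->
  exists m, forall s, R m s -> R s m.
Proof.
move=> Rrefl Rtrans Rchain.
have [||C Ctot|m Hm] := ZL_preorder t0 (R := fun x y => `[< R x y >]).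
- by move=> x; apply/asboolP.
- by move=> x y z /asboolP Rxy /asboolP Ryz; apply/asboolP; exact: Rtrans Rxy Ryz.
- have [|u Hu] := Rchain C; last by exists u => s Cs; apply/asboolP; exact: Hu.
  by move=> s t Cs Ct; case: (Ctot s t Cs Ct) => /asboolP; auto.
by exists m => s /asboolP /Hm /asboolP.
Qed.

Lemma strict_well_order_exists (T : Type) : exists lt : T -> T -> Prop, strict_well_order lt.
Proof.
have [R woR] := @well_ordering_principle {classic T}.
have Rtotal := wo_chainW (withinW (A := predT) woR).
have Ranti := wo_chain_antisymmetric (withinW (A := predT) woR).
have Rrefl := wo_chain_reflexive (withinW (A := predT) woR).
have Rmin (P : T -> Prop) : (exists x, P x) -> exists2 z, P z & forall x, P x -> R z x.
  case=> x Px; have [|z [[/asboolP Pz zmin] _]] := woR [pred y | `[< P y >]].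
    by exists x; apply/asboolP.
  by exists z => // y Py; apply: zmin; apply/asboolP.
have Rtrans x y z : R x y -> R y z -> R x z.
  move=> Rxy Ryz; have [|m Hm mmin] := Rmin (fun w => [\/ w = x, w = y | w = z]).
    by exists x; apply: Or31.
  case: Hm => ?; subst m.
  - by apply: mmin; apply: Or33.
  - by rewrite (Ranti x y) // Rxy mmin //; apply: Or31.
  - by rewrite -(Ranti y z) // Ryz mmin //; apply: Or32.
exists (fun x y => ~ R y x); split; [|split; [|split]].
- move=> a; apply: NNPP => nAa.
  have [z nAz zmin] := Rmin (fun w => ~ Acc (fun x y => ~ R y x) w) (ex_intro _ a nAa).
  by apply: nAz; constructor => y nRzy; apply: NNPP => nAy; apply: nRzy; exact: zmin.
- move=> x y z nRyx nRzy Rzx; apply: nRzy.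
  by apply: Rtrans Rzx _; case/orP: (Rtotal x y isT isT) => // Ryx; case: nRyx.
- move=> x y; case Ryx: (R y x); last by left.
  case Rxy: (R x y); last by right; right.
  by right; left; apply: Ranti; rewrite // Rxy Ryx.
- by move=> x; apply; apply: Rrefl.
Qed.

End ChoicePrinciples.

Definition choose {T : Type} {P : T -> Prop} (H : exists x, P x) : T :=
  proj1_sig (constructive_indefinite_description P H).

Lemma choose_spec {T : Type} {P : T -> Prop} (H : exists x, P x) : P (choose H).
Proof. exact (proj2_sig (constructive_indefinite_description P H)). Qed.

Lemma proj1_sig_inj {T : Type} {P : T -> Prop} (x y : {t | P t}) :
  proj1_sig x = proj1_sig y -> x = y.
Proof. apply eq_sig_hprop; intros; apply proof_irrelevance. Qed.

Definition incl {O : Type} {D1 D2 : O -> Prop} (sub : forall w, D1 w -> D2 w)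
  (x : {w | D1 w}) : {w | D2 w} :=
  exist D2 (proj1_sig x) (sub _ (proj2_sig x)).

Definition finite {T : Type} (B : T -> Prop) : Prop := exists l, forall x, B x -> In x l.

Lemma list_sig_cover {T : Type} (P : T -> Prop) (l : list T) :
  exists l' : list {x | P x}, forall x (H : P x), In x l -> In (exist P x H) l'.
Proof.
  induction l as [|a l [l' Hl']]; [exists nil; intros _ _ []|].
  destruct (classic (P a)) as [Pa|nPa].
  - exists (exist P a Pa :: l'); intros x H [<-|Hx].
    + left; apply proj1_sig_inj; reflexivity.
    + right; auto.
  - exists l'; intros x H [<-|Hx]; [contradiction|auto].
Qed.

Definition image {B O : Type} (j : B -> O) (w : O) : Prop := exists b, j b = w.

Definition to_image {B O : Type} (j : B -> O) (b : B) : {w | image j w} :=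
  exist (image j) (j b) (ex_intro _ b eq_refl).

Lemma to_image_injective {B O : Type} (j : B -> O) : Injective j -> Injective (to_image j).
Proof. intros j_inj x y e; apply j_inj; exact (f_equal (@proj1_sig _ _) e). Qed.

Lemma to_image_surjective {B O : Type} (j : B -> O) : Surjective (to_image j).
Proof. intros [w [b <-]]; exists b; reflexivity. Qed.

Section Structures.
Context {L : Language} {A : ULAlgebra}.

Definition hom {M N : Type} (SM : AStr L A M) (SN : AStr L A N) (e : M -> N) : Prop :=
  (forall f args, e (funI SM f args) = funI SN f (fun i => e (args i))) /\
  (forall P args, predI SN P (fun i => e (args i)) = predI SM P args).

Lemma hom_ext {M N : Type} (SM : AStr L A M) (SN : AStr L A N) (e e' : M -> N) :
  (forall x, e x = e' x) -> hom SM SN e -> hom SM SN e'.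
Proof. intro E; replace e' with e by (extensionality x; apply E); auto. Qed.

Lemma tval_comm {M N : Type} (SM : AStr L A M) (SN : AStr L A N) (e : M -> N) :
  (forall f args, e (funI SM f args) = funI SN f (fun i => e (args i))) ->
  forall v t, e (tval SM v t) = tval SN (fun n => e (v n)) t.
Proof.
  intros He v t; induction t as [n|f args IH]; simpl; [reflexivity|].
  rewrite He; f_equal; extensionality i; apply IH.
Qed.

Lemma fval_hom {M N : Type} (SM : AStr L A M) (SN : AStr L A N) (e : M -> N) :
  hom SM SN e -> forall phi v, fval SM v phi = fval SN (fun n => e (v n)) phi.
Proof.
  intros [Hf Hp] phi v; induction phi; simpl; try congruence.
  rewrite <- Hp; f_equal; extensionality i; apply tval_comm, Hf.
Qed.

Lemma hom_comp {M N P : Type} (SM : AStr L A M) (SN : AStr L A N) (SP : AStr L A P)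
  (e1 : M -> N) (e2 : N -> P) :
  hom SM SN e1 -> hom SN SP e2 -> hom SM SP (fun x => e2 (e1 x)).
Proof.
  intros [f1 p1] [f2 p2]; split; intros.
  - rewrite f1, f2; reflexivity.
  - rewrite (p2 _ (fun i => e1 (args i))), p1; reflexivity.
Qed.

Lemma hom_embedding {M N : Type} (SM : AStr L A M) (SN : AStr L A N) (e : M -> N) :
  hom SM SN e -> Injective e -> embedding SM SN e.
Proof. intros He e_inj; repeat split; [exact e_inj|apply He|apply fval_hom, He]. Qed.

(* Over an empty universe an embedding need not preserve nullary predicates. *)
Lemma embedding_hom {M N : Type} (SM : AStr L A M) (SN : AStr L A N) (e : M -> N) :
  embedding SM SN e -> inhabited M -> hom SM SN e.
Proof.
  intros (_ & Hf & Hv) [d]; split; [exact Hf|intros P args].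
  set (v := fun k => match lt_dec k (parity P) with
                     | left H => args (Fin.of_nat_lt H) | right _ => d end).
  assert (Hv_args : (fun i => v (proj1_sig (Fin.to_nat i))) = args).
  { extensionality i; unfold v; destruct (lt_dec _ _) as [h|h].
    - rewrite <- (Fin.of_nat_to_nat_inv i) at 2; f_equal; apply Fin.of_nat_ext.
    - destruct (h (proj2_sig (Fin.to_nat i))). }
  pose proof (Hv (fatom P (fun i => tvar (proj1_sig (Fin.to_nat i)))) v) as E; simpl in E.
  rewrite Hv_args in E; rewrite E; f_equal; extensionality i.
  rewrite <- Hv_args; reflexivity.
Qed.

Lemma embedding_comp {M N P : Type} (SM : AStr L A M) (SN : AStr L A N) (SP : AStr L A P)
  (e1 : M -> N) (e2 : N -> P) :
  embedding SM SN e1 -> embedding SN SP e2 -> embedding SM SP (fun x => e2 (e1 x)).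
Proof.
  intros (i1 & f1 & v1) (i2 & f2 & v2); repeat split.
  - intros x y h; apply i1, i2, h.
  - intros f args; rewrite f1, f2; reflexivity.
  - intros phi v; rewrite v1, v2; reflexivity.
Qed.

Lemma isomorphic_refl {M : Type} (SM : AStr L A M) : isomorphic SM SM.
Proof.
  exists (fun x => x); split; [|intro y; exists y; reflexivity].
  repeat split; auto.
Qed.

Lemma empty_embedding {M N : Type} (SM : AStr L A M) (SN : AStr L A N) (Mempty : ~ inhabited M) :
  embedding SM SN (fun x => False_rect N (Mempty (inhabits x))).
Proof.
  repeat split.
  - intros x; destruct (Mempty (inhabits x)).
  - intros f args; destruct (Mempty (inhabits (funI SM f args))).
  - intros phi v; destruct (Mempty (inhabits (v 0))).
Qed.

Lemma hom_isomorphic {M N : Type} (SM : AStr L A M) (SN : AStr L A N) (e : M -> N) :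
  hom SM SN e -> Injective e -> Surjective e -> isomorphic SM SN.
Proof. intros He e_inj e_surj; exists e; split; [apply hom_embedding|]; assumption. Qed.

Lemma isomorphic_sym {M N : Type} (SM : AStr L A M) (SN : AStr L A N) :
  isomorphic SM SN -> isomorphic SN SM.
Proof.
  intros (e & (e_inj & Hf & Hv) & e_surj).
  set (g := fun y => choose (e_surj y)).
  assert (eg : forall y, e (g y) = y) by (intro y; apply (choose_spec (e_surj y))).
  assert (e_g : forall (I : Type) (h : I -> N), (fun i => e (g (h i))) = h)
    by (intros I h; extensionality i; apply eg).
  exists g; repeat split.
  - intros x y h; rewrite <- (eg x), <- (eg y), h; reflexivity.
  - intros f args; apply e_inj; rewrite eg, Hf, e_g; reflexivity.
  - intros phi v; rewrite Hv, e_g; reflexivity.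
  - intro x; exists (e x); apply e_inj, eg.
Qed.

Lemma fin_generated_isomorphic {M N : Type} (SM : AStr L A M) (SN : AStr L A N) :
  isomorphic SM SN -> fin_generated SM -> fin_generated SN.
Proof.
  intros (e & (_ & Hf & _) & e_surj) [l Hl]; exists (map e l); intro y.
  destruct (e_surj y) as [x <-]; induction (Hl x) as [x Hx|f args _ IH].
  - apply gen_base, in_map, Hx.
  - rewrite Hf; apply gen_app, IH.
Qed.

Lemma proj1_sig_hom {N : Type} (SN : AStr L A N) (X : N -> Prop) (HX : fclosed SN X) :
  hom (subS SN X HX) SN (@proj1_sig _ _).
Proof. split; reflexivity. Qed.

Lemma subS_full_isomorphic {N : Type} (SN : AStr L A N) (X : N -> Prop) (HX : fclosed SN X) :
  (forall x, X x) -> isomorphic (subS SN X HX) SN.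
Proof.
  intros Xfull; apply (hom_isomorphic _ _ _ (proj1_sig_hom SN X HX)).
  - intros x y; apply proj1_sig_inj.
  - intro y; exists (exist X y (Xfull y)); reflexivity.
Qed.

Lemma subS_nested_isomorphic {N : Type} (SN : AStr L A N) (X Y : N -> Prop)
  (HX : fclosed SN X) (HY : fclosed SN Y) (HYX : forall y, Y y -> X y)
  (HY' : fclosed (subS SN X HX) (fun u => Y (proj1_sig u))) :
  isomorphic (subS SN Y HY) (subS (subS SN X HX) (fun u => Y (proj1_sig u)) HY').
Proof.
  apply (hom_isomorphic _ _
    (fun y : {y | Y y} =>
       exist (fun u => Y (proj1_sig u)) (exist X (proj1_sig y) (HYX _ (proj2_sig y)))
             (proj2_sig y))).
  - split; [intros f args; apply proj1_sig_inj, proj1_sig_inj|]; reflexivity.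
  - intros y y' E; apply proj1_sig_inj; exact (f_equal (fun z => proj1_sig (proj1_sig z)) E).
  - intros [[x Hx] Hy]; exists (exist Y x Hy); apply proj1_sig_inj, proj1_sig_inj; reflexivity.
Qed.

Lemma embedding_corestrict {M N : Type} (SM : AStr L A M) (SN : AStr L A N) (e : M -> N)
  (X : N -> Prop) (HX : fclosed SN X) (H : forall x, X (e x)) :
  embedding SM SN e -> embedding SM (subS SN X HX) (fun x => exist X (e x) (H x)).
Proof.
  intros (e_inj & Hf & Hv); repeat split.
  - intros x y h; apply e_inj; exact (f_equal (@proj1_sig _ _) h).
  - intros f args; apply proj1_sig_inj, Hf.
  - intros phi v; rewrite (fval_hom _ _ _ (proj1_sig_hom SN X HX)); apply Hv.
Qed.

Lemma image_fclosed {M N : Type} (SM : AStr L A M) (SN : AStr L A N) (e : M -> N) :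
  embedding SM SN e -> fclosed SN (image e).
Proof.
  intros (_ & Hf & _) f args Hargs.
  exists (funI SM f (fun i => choose (Hargs i))); rewrite Hf; f_equal.
  extensionality i; apply (choose_spec (Hargs i)).
Qed.

Lemma embedding_image_isomorphic {M N : Type} (SM : AStr L A M) (SN : AStr L A N)
  (e : M -> N) (He : embedding SM SN e) :
  isomorphic SM (subS SN (image e) (image_fclosed SM SN e He)).
Proof.
  exists (to_image e); split; [|apply to_image_surjective].
  exact (embedding_corestrict SM SN e _ _ (fun x => ex_intro _ x eq_refl) He).
Qed.

Inductive closure {N : Type} (SN : AStr L A N) (B : N -> Prop) : N -> Prop :=
| closure_base x : B x -> closure SN B x
| closure_app f args : (forall i, closure SN B (args i)) -> closure SN B (funI SN f args).

Lemma closure_fclosed {N : Type} (SN : AStr L A N) (B : N -> Prop) : fclosed SN (closure SN B).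
Proof. exact (closure_app SN B). Qed.

Lemma closure_mono {N : Type} (SN : AStr L A N) (B B' : N -> Prop) :
  (forall x, B x -> B' x) -> forall x, closure SN B x -> closure SN B' x.
Proof. intros HB x; induction 1; [apply closure_base|apply closure_app]; auto. Qed.

Lemma fin_generated_closure {N : Type} (SN : AStr L A N) (B : N -> Prop) :
  finite B -> fin_generated (subS SN (closure SN B) (closure_fclosed SN B)).
Proof.
  intros [l Hl]; destruct (list_sig_cover (closure SN B) l) as [l' Hl'].
  assert (Hgen : forall x, closure SN B x -> forall H,
            generated (subS SN _ (closure_fclosed SN B)) l' (exist _ x H)).
  { induction 1 as [x Bx|f args Hargs IH]; intro H.
    - apply gen_base, Hl', Hl, Bx.
    - assert (E : exist _ (funI SN f args) H =
                    funI (subS SN _ (closure_fclosed SN B)) f (fun i => exist _ _ (Hargs i)))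
        by (apply proj1_sig_inj; reflexivity).
      rewrite E; apply gen_app; intro i; apply IH. }
  exists l'; intros [x H]; exact (Hgen x H H).
Qed.

End Structures.

Definition injective_on {T U : Type} (B : T -> Prop) (g : T -> U) : Prop :=
  forall x y, B x -> B y -> g x = g y -> x = y.

Definition chain {I T : Type} (C : I -> T -> Prop) : Prop :=
  forall i j, (forall x, C i x -> C j x) \/ (forall x, C j x -> C i x).

Lemma finite_injective_on {T U : Type} (B : T -> Prop) (g : T -> U) (l : list U) :
  injective_on B g -> (forall x, B x -> In (g x) l) -> finite B.
Proof.
  intros g_inj Hl.
  destruct (list_sig_cover (fun u => exists x, B x /\ g x = u) l) as [l' Hl'].
  exists (map (fun s => choose (proj2_sig s)) l'); intros x Bx.
  set (s := exist (fun u => exists x, B x /\ g x = u) (g x) (ex_intro _ x (conj Bx eq_refl))).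
  replace x with (choose (proj2_sig s)).
  - apply (in_map (fun s : {u | exists x, B x /\ g x = u} => choose (proj2_sig s))).
    apply Hl', Hl, Bx.
  - destruct (choose_spec (proj2_sig s)) as [Bc gc]; apply g_inj; auto.
Qed.

Lemma infinite_injection_nat {T : Type} (Y : T -> Prop) :
  ~ finite Y -> exists h : nat -> T, (forall n, Y (h n)) /\ Injective h.
Proof.
  intro Yinf.
  assert (fresh : forall l : list T, exists y, Y y /\ ~ In y l).
  { intro l; apply NNPP; intro no; apply Yinf; exists l; intros y Yy.
    apply NNPP; intro ni; apply no; exists y; auto. }
  set (next := fun l => choose (fresh l)).
  set (prefix := fix prefix n := match n with 0 => nil | S n => next (prefix n) :: prefix n end).
  assert (prefix_in : forall m n, m < n -> In (next (prefix m)) (prefix n)).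
  { intros m n; induction n as [|n IHn]; intro h; [lia|]; simpl.
    destruct (Nat.eq_dec m n) as [<-|ne]; [left; reflexivity|right; apply IHn; lia]. }
  exists (fun n => next (prefix n)); split; [intro n; apply (choose_spec (fresh _))|].
  intros n m e; destruct (Nat.lt_trichotomy n m) as [h|[h|h]]; [exfalso|exact h|exfalso].
  - apply (proj2 (choose_spec (fresh (prefix m)))); fold (next (prefix m)).
    rewrite <- e; apply prefix_in, h.
  - apply (proj2 (choose_spec (fresh (prefix n)))); fold (next (prefix n)).
    rewrite e; apply prefix_in, h.
Qed.

(* Hilbert's hotel: shift the point [a] into [Y] along an injective sequence. *)
Lemma infinite_absorbs_point {T : Type} (Y : T -> Prop) (a : T) :
  ~ finite Y -> ~ Y a -> exists k : T -> T, Injective k /\ forall y, Y y \/ y = a -> Y (k y).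
Proof.
  intros Yinf Ya.
  destruct (infinite_injection_nat Y Yinf) as [h [hY h_inj]].
  set (s := fun n => match n with 0 => a | S n => h n end).
  assert (s_inj : Injective s).
  { intros [|n] [|m] e; simpl in e.
    - reflexivity.
    - exfalso; apply Ya; rewrite e; apply hY.
    - exfalso; apply Ya; rewrite <- e; apply hY.
    - f_equal; apply h_inj, e. }
  set (k := fun y => match excluded_middle_informative (exists n, s n = y) with
                     | left H => s (S (choose H)) | right _ => y end).
  assert (k_on : forall n, k (s n) = s (S n)).
  { intro n; unfold k; destruct (excluded_middle_informative _) as [H|H].
    - do 2 f_equal; apply s_inj, (choose_spec H).
    - exfalso; apply H; exists n; reflexivity. }
  assert (k_off : forall y, ~ (exists n, s n = y) -> k y = y).
  { intros y Hy; unfold k; destruct (excluded_middle_informative _); tauto. }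
  exists k; split.
  - intros x y; destruct (classic (exists n, s n = x)) as [[n <-]|nx];
      destruct (classic (exists m, s m = y)) as [[m <-]|ny].
    + rewrite !k_on; intro e; apply s_inj in e; injection e as ->; reflexivity.
    + rewrite k_on, (k_off y ny); intros <-; exfalso; apply ny; exists (S n); reflexivity.
    + rewrite k_on, (k_off x nx); intros ->; exfalso; apply nx; exists (S m); reflexivity.
    + rewrite (k_off x nx), (k_off y ny); auto.
  - intros y Hy; destruct (classic (exists n, s n = y)) as [[n <-]|ny].
    + rewrite k_on; apply hY.
    + rewrite (k_off y ny); destruct Hy as [Yy| ->]; [exact Yy|].
      exfalso; apply ny; exists 0; reflexivity.
Qed.

Definition lt_top {W : Type} (lt : W -> W -> Prop) (a b : option W) : Prop :=
  match a, b with
  | Some x, Some y => lt x y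
  | Some _, None => True
  | None, _ => False
  end.

Lemma lt_top_strict_well_order {W : Type} (lt : W -> W -> Prop) :
  strict_well_order lt -> strict_well_order (lt_top lt).
Proof.
  intros (wf & trans & tri & irr); split; [|split; [|split]].
  - assert (Acc_Some : forall x, Acc (lt_top lt) (Some x)).
    { intro x; induction (wf x) as [x _ IH]; constructor.
      intros [y|] h; [apply IH, h|destruct h]. }
    intros [x|]; [apply Acc_Some|constructor; intros [y|] h; [apply Acc_Some|destruct h]].
  - intros [x|] [y|] [z|]; simpl; try tauto; apply trans.
  - intros [x|] [y|]; simpl; auto; destruct (tri x y) as [h|[->|h]]; auto.
  - intros [x|]; simpl; auto.
Qed.

Section ChainUnionInduction.
Variables (T : Type) (F : (T -> Prop) -> Prop).
Hypothesis F_finite : forall B, finite B -> F B.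
Hypothesis F_union : forall (I : Type) (C : I -> T -> Prop),
  inhabited I -> chain C -> (forall i, F (C i)) -> F (fun x => exists i, C i x).

Section Bounded.
Variables (W : Type) (lt : W -> W -> Prop).
Hypothesis lt_wo : strict_well_order lt.

Definition embeds_below (B : T -> Prop) (t : W) : Prop :=
  exists g : T -> W, injective_on B g /\ forall x, B x -> lt (g x) t.

Lemma embeds_below_last (B : T -> Prop) (t b : W) :
  ~ finite B -> embeds_below B t -> lt b t -> ~ (exists c, lt b c /\ lt c t) ->
  embeds_below B b.
Proof.
  destruct lt_wo as (_ & trans & tri & irr).
  intros Binf [g [g_inj g_lt]] bt b_last.
  assert (g_le : forall x, B x -> lt (g x) b \/ g x = b).
  { intros x Bx; destruct (tri (g x) b) as [h|[h|h]]; auto.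
    exfalso; apply b_last; exists (g x); auto. }
  assert (below_inf : ~ finite (fun y => lt y b)).
  { intros [l Hl]; apply Binf, (finite_injective_on B g (b :: l) g_inj).
    intros x Bx; destruct (g_le x Bx); [right|left]; auto. }
  destruct (infinite_absorbs_point _ b below_inf (irr b)) as [k [k_inj k_into]].
  exists (fun x => k (g x)); split.
  - intros x y Bx By e; apply g_inj, k_inj; auto.
  - intros x Bx; apply k_into, g_le, Bx.
Qed.

(* An infinite [B] embedding below [t] but below no smaller bound is the union of the
   chain of its parts mapped to at most [b], for [b < t], each of which embeds below a
   smaller bound. *)
Lemma F_of_embeds_below (t : W) (B : T -> Prop) : embeds_below B t -> F B.
Proof.
  destruct lt_wo as (wf & trans & tri & irr).
  revert B; induction (wf t) as [t _ IH]; intros B HB.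
  destruct (classic (exists s, lt s t /\ embeds_below B s)) as [[s [st Bs]]|no_smaller].
  { exact (IH s st B Bs). }
  destruct (classic (finite B)) as [Bfin|Binf]; [apply F_finite, Bfin|].
  destruct HB as [g [g_inj g_lt]].
  set (C := fun (b : {b | lt b t}) x => B x /\ ~ lt (proj1_sig b) (g x)).
  replace B with (fun x => exists b, C b x).
  2:{ extensionality x; apply propositional_extensionality; split.
      - intros [b [Bx _]]; exact Bx.
      - intro Bx; exists (exist _ (g x) (g_lt x Bx)); split; [exact Bx|apply irr]. }
  apply F_union.
  - destruct (classic (exists x, B x)) as [[x Bx]|Bempty].
    + exact (inhabits (exist _ (g x) (g_lt x Bx))).
    + exfalso; apply Binf; exists nil; intros x Bx; apply Bempty; exists x; exact Bx.
  - intros [b bt] [c ct]; simpl.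
    destruct (tri b c) as [h|[<-|h]]; [left|left; auto|right];
      intros x [Bx nlt]; split; try exact Bx; intro h'; apply nlt; eapply trans; eauto.
  - intros [b bt]; simpl.
    destruct (classic (exists c, lt b c /\ lt c t)) as [[c [bc ct]]|b_last].
    + apply (IH c ct); exists g; split.
      * intros x y [Bx _] [By _]; apply g_inj; auto.
      * intros x [Bx nlt]; destruct (tri (g x) b) as [h|[->|h]];
          [exact (trans _ _ _ h bc)|exact bc|contradiction].
    + exfalso; apply no_smaller; exists b; split; [exact bt|].
      exact (embeds_below_last B t b Binf (ex_intro _ g (conj g_inj g_lt)) bt b_last).
Qed.

End Bounded.

Theorem chain_union_induction (B : T -> Prop) : F B.
Proof.
  destruct (ChoicePrinciples.strict_well_order_exists T) as [lt lt_wo].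
  apply (F_of_embeds_below _ _ (lt_top_strict_well_order lt lt_wo) None).
  exists Some; split; [intros x y _ _ e; injection e; auto|intros; exact I].
Qed.

End ChainUnionInduction.

Lemma fin_family_common_bound {I : Type} (le : I -> I -> Prop) :
  inhabited I -> (forall i j, le i j \/ le j i) ->
  forall n (Q : Fin.t n -> I -> Prop), (forall k i j, le i j -> Q k i -> Q k j) ->
  (forall k, exists i, Q k i) -> exists i, forall k, Q k i.
Proof.
  intros [i0] tot n; induction n as [|n IH]; intros Q Q_mono HQ.
  - exists i0; intro k; apply (Fin.case0 (fun k => Q k i0) k).
  - destruct (IH (fun k => Q (Fin.FS k))) as [i1 H1]; [intros k; apply Q_mono|intro k; apply HQ|].
    destruct (HQ Fin.F1) as [j0 H0].
    destruct (tot j0 i1) as [h|h]; [exists i1|exists j0]; intro k; pattern k; apply Fin.caseS';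
      eauto.
Qed.

Section LocalToGlobal.
Context {L : Language} {A : ULAlgebra} (K : StrClass L A).
Hypotheses (Kiso : iso_closed K) (Kun : union_closed K).

Lemma closure_union_chain {N I : Type} (SN : AStr L A N) (C : I -> N -> Prop) :
  inhabited I -> chain C ->
  forall x, closure SN (fun x => exists i, C i x) x -> exists i, closure SN (C i) x.
Proof.
  intros inh ch x; induction 1 as [x [i Hi]|f args _ IH].
  - exists i; apply closure_base, Hi.
  - destruct (fin_family_common_bound (fun i j => forall x, C i x -> C j x) inh ch _
                (fun k i => closure SN (C i) (args k))) as [i Hi].
    + intros k i j h; apply closure_mono, h.
    + exact IH.
    + exists i; apply closure_app, Hi.
Qed.

Lemma closure_union_chain_mem {M I : Type} (SM : AStr L A M) (C : I -> M -> Prop) :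
  inhabited I -> chain C ->
  (forall i, K _ (subS SM (closure SM (C i)) (closure_fclosed SM (C i)))) ->
  K _ (subS SM _ (closure_fclosed SM (fun x => exists i, C i x))).
Proof.
  intros inh ch KC.
  set (U := fun x => exists i, C i x).
  set (X := fun i (u : {x | closure SM U x}) => closure SM (C i) (proj1_sig u)).
  assert (HX : forall i, fclosed (subS SM _ (closure_fclosed SM U)) (X i))
    by (intros i f args H; apply closure_app, H).
  assert (CU : forall i x, closure SM (C i) x -> closure SM U x)
    by (intro i; apply closure_mono; intros x h; exists i; exact h).
  apply (Kun _ _ I X HX inh).
  - intros i j; destruct (ch i j) as [h|h]; [left|right]; intro u; apply closure_mono, h.
  - intros [x Hx]; exact (closure_union_chain SM C inh ch x Hx).
  - intro i; exact (Kiso _ _ _ _ (subS_nested_isomorphic SM _ _ _ _ (CU i) (HX i)) (KC i)).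
Qed.

Lemma mem_of_fin_generated_substructures {M : Type} (SM : AStr L A M) :
  (forall X HX, fin_generated (subS SM X HX) -> K _ (subS SM X HX)) -> K M SM.
Proof.
  intro Kfg.
  assert (Kclosure : forall B, K _ (subS SM (closure SM B) (closure_fclosed SM B))).
  { apply chain_union_induction.
    - intros B Bfin; apply Kfg, fin_generated_closure, Bfin.
    - intros I C; apply closure_union_chain_mem. }
  exact (Kiso _ _ _ _ (subS_full_isomorphic SM _ _ (fun x => closure_base SM _ x I))
              (Kclosure (fun _ => True))).
Qed.

End LocalToGlobal.

Section Age.
Context {L : Language} {A : ULAlgebra}.

Lemma inAge_fin_generated {N B : Type} (SN : AStr L A N) (SB : AStr L A B) :
  inAge SN SB -> fin_generated SB.
Proof.
  intros (X & HX & fgX & isoX).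
  exact (fin_generated_isomorphic _ _ (isomorphic_sym _ _ isoX) fgX).
Qed.

Lemma inAge_mem (K : StrClass L A) {N B : Type} (SN : AStr L A N) (SB : AStr L A B) :
  iso_closed K -> HP K -> K N SN -> inAge SN SB -> K B SB.
Proof.
  intros Kiso Khp KN (X & HX & _ & isoX).
  exact (Kiso _ _ _ _ (isomorphic_sym _ _ isoX) (Khp _ _ X HX KN)).
Qed.

Lemma inAge_of_embedding {N B : Type} (SN : AStr L A N) (SB : AStr L A B) (e : B -> N) :
  embedding SB SN e -> fin_generated SB -> inAge SN SB.
Proof.
  intros He fgB; exists (image e), (image_fclosed SB SN e He).
  pose proof (embedding_image_isomorphic SB SN e He) as iso.
  split; [exact (fin_generated_isomorphic _ _ iso fgB)|exact iso].
Qed.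

Lemma inAge_fin_generated_subS {M : Type} (SM : AStr L A M) (X : M -> Prop)
  (HX : fclosed SM X) :
  fin_generated (subS SM X HX) -> inAge SM (subS SM X HX).
Proof. intro fgX; exists X, HX; split; [exact fgX|apply isomorphic_refl]. Qed.

End Age.

Inductive vterm (L : Language) (V : Type) : Type :=
| vvar : V -> vterm L V
| vapp : forall f : Fsym L, (Fin.t (farity f) -> vterm L V) -> vterm L V.
Arguments vvar {L V} _.
Arguments vapp {L V} f _.

Record PStr (L : Language) (A : ULAlgebra) (O : Type) := {
  pdom : O -> Prop;
  pstr : AStr L A {w | pdom w}
}.
Arguments pdom {L A O} _ _.
Arguments pstr {L A O} _.

Definition pcar {L : Language} {A : ULAlgebra} {O : Type} (p : PStr L A O) : Type :=
  {w | pdom p w}.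

Section Terms.
Context {L : Language} {A : ULAlgebra}.

Inductive denotes {N V : Type} (SN : AStr L A N) (sg : V -> N -> Prop) :
  vterm L V -> N -> Prop :=
| denotes_var v y : sg v y -> denotes SN sg (vvar v) y
| denotes_app f ts ys :
    (forall i, denotes SN sg (ts i) (ys i)) -> denotes SN sg (vapp f ts) (funI SN f ys).

Lemma denotes_functional {N V : Type} (SN : AStr L A N) (sg : V -> N -> Prop) :
  (forall v y y', sg v y -> sg v y' -> y = y') ->
  forall t y y', denotes SN sg t y -> denotes SN sg t y' -> y = y'.
Proof.
  intros sg_fun t y y' H; revert y'.
  induction H as [v y Hv|f ts ys _ IH]; intros y' H'; inversion H' as [v' y'' Hv'|f' ts' ys' Hts'].
  - subst; eauto.
  - match goal with E : existT _ _ _ = existT _ _ _ |- _ => apply inj_pair2 in E end.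
    subst; f_equal; extensionality i; apply IH, Hts'.
Qed.

Lemma denotes_map {N N' V : Type} (SN : AStr L A N) (SN' : AStr L A N')
  (sg : V -> N -> Prop) (sg' : V -> N' -> Prop) (h : N -> N') :
  (forall f args, h (funI SN f args) = funI SN' f (fun i => h (args i))) ->
  (forall v y, sg v y -> sg' v (h y)) ->
  forall t y, denotes SN sg t y -> denotes SN' sg' t (h y).
Proof.
  intros Hf Hsg t y; induction 1 as [v y Hv|f ts ys _ IH].
  - apply denotes_var, Hsg, Hv.
  - rewrite Hf; apply denotes_app, IH.
Qed.

Lemma fin_generated_term_injection {B : Type} (SB : AStr L A B) :
  fin_generated SB -> exists j : B -> term L, Injective j.
Proof.
  intros [l Hl]; destruct (classic (inhabited B)) as [[d]|Bempty].
  - assert (Hv : forall b, exists t, tval SB (fun n => nth n l d) t = b).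
    { intro b; induction (Hl b) as [x Hx|f args _ IH].
      - destruct (In_nth l x d Hx) as [n [_ e]]; exists (tvar n); exact e.
      - exists (tapp f (fun i => choose (IH i))); simpl; f_equal.
        extensionality i; exact (choose_spec (IH i)). }
    exists (fun b => choose (Hv b)); intros x y e.
    rewrite <- (choose_spec (Hv x)), <- (choose_spec (Hv y)), e; reflexivity.
  - exists (fun b => False_rect _ (Bempty (inhabits b))); intros x; destruct (Bempty (inhabits x)).
Qed.

Definition transport {B O : Type} (SB : AStr L A B) (j : B -> O) : AStr L A {w | image j w} :=
  {| funI := fun f args => to_image j (funI SB f (fun i => choose (proj2_sig (args i))));
     predI := fun P args => predI SB P (fun i => choose (proj2_sig (args i))) |}.

Lemma transport_hom {B O : Type} (SB : AStr L A B) (j : B -> O) :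
  Injective j -> hom SB (transport SB j) (to_image j).
Proof.
  intro j_inj.
  assert (E : forall (I : Type) (args : I -> B),
             (fun i => choose (proj2_sig (to_image j (args i)))) = args).
  { intros I args; extensionality i; apply j_inj.
    exact (choose_spec (proj2_sig (to_image j (args i)))). }
  split; intros; cbn [transport funI predI]; rewrite E; reflexivity.
Qed.

Lemma transport_isomorphic {B O : Type} (SB : AStr L A B) (j : B -> O) :
  Injective j -> isomorphic SB (transport SB j).
Proof.
  intro j_inj; apply (hom_isomorphic _ _ _ (transport_hom SB j j_inj)).
  - apply to_image_injective, j_inj.
  - apply to_image_surjective.
Qed.

End Terms.

Section PartialStructures.
Context {L : Language} {A : ULAlgebra} {O : Type}.

Definition extends (p q : PStr L A O) : Prop :=
  exists sub : forall w, pdom p w -> pdom q w, hom (pstr p) (pstr q) (incl sub).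

Lemma extends_refl (p : PStr L A O) : extends p p.
Proof.
  exists (fun w h => h).
  assert (E : forall (I : Type) (args : I -> pcar p),
             (fun i => incl (fun w (h : pdom p w) => h) (args i)) = args)
    by (intros I args; extensionality i; destruct (args i); reflexivity).
  split; intros; rewrite E; [destruct (funI _ _ _)|]; reflexivity.
Qed.

Lemma extends_trans (p q s : PStr L A O) : extends p q -> extends q s -> extends p s.
Proof.
  intros [sub1 h1] [sub2 h2]; exists (fun w h => sub2 w (sub1 w h)).
  exact (hom_comp _ _ _ _ _ h1 h2).
Qed.

Section ChainUnion.
Variables (I : Type) (P : I -> PStr L A O) (i0 : I).
Hypothesis P_chain : forall i j, extends (P i) (P j) \/ extends (P j) (P i).

Definition union_dom (w : O) : Prop := exists i, pdom (P i) w.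

Lemma union_args_bound n (args : Fin.t n -> {w | union_dom w}) :
  exists i, forall k, pdom (P i) (proj1_sig (args k)).
Proof.
  apply (fin_family_common_bound (fun i j => forall w, pdom (P i) w -> pdom (P j) w)).
  - exact (inhabits i0).
  - intros i j; destruct (P_chain i j) as [[sub _]|[sub _]]; auto.
  - intros k i j h; apply h.
  - intro k; exact (proj2_sig (args k)).
Qed.

Definition restrict_args i n (args : Fin.t n -> {w | union_dom w})
  (H : forall k, pdom (P i) (proj1_sig (args k))) : Fin.t n -> pcar (P i) :=
  fun k => exist _ (proj1_sig (args k)) (H k).

Definition to_union (i : I) : pcar (P i) -> {w | union_dom w} :=
  incl (fun w h => ex_intro _ i h).

(* Computed in any member of the chain containing the arguments; by [to_union_hom]
   the choice does not matter. *)
Definition union_str : AStr L A {w | union_dom w} :=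
  {| funI := fun f args =>
       let H := union_args_bound _ args in
       to_union (choose H) (funI (pstr (P (choose H))) f (restrict_args _ _ args (choose_spec H)));
     predI := fun Q args =>
       let H := union_args_bound _ args in
       predI (pstr (P (choose H))) Q (restrict_args _ _ args (choose_spec H)) |}.

Definition union_pstr : PStr L A O := {| pdom := union_dom; pstr := union_str |}.

Lemma to_union_hom (i : I) : hom (pstr (P i)) union_str (to_union i).
Proof.
  split.
  - intros f args; cbn [union_str funI].
    set (H := union_args_bound _ _); set (j := choose H).
    set (rargs := restrict_args j _ _ (choose_spec H)).
    apply proj1_sig_inj; simpl.
    destruct (P_chain i j) as [[sub [hf _]]|[sub [hf _]]].
    + replace rargs with (fun k => incl sub (args k))
        by (extensionality k; apply proj1_sig_inj; reflexivity).
      rewrite <- hf; reflexivity.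
    + replace args with (fun k => incl sub (rargs k))
        by (extensionality k; apply proj1_sig_inj; reflexivity).
      rewrite <- hf; reflexivity.
  - intros Q args; cbn [union_str predI].
    set (H := union_args_bound _ _); set (j := choose H).
    set (rargs := restrict_args j _ _ (choose_spec H)).
    destruct (P_chain i j) as [[sub [_ hp]]|[sub [_ hp]]].
    + replace rargs with (fun k => incl sub (args k))
        by (extensionality k; apply proj1_sig_inj; reflexivity).
      apply hp.
    + replace args with (fun k => incl sub (rargs k))
        by (extensionality k; apply proj1_sig_inj; reflexivity).
      symmetry; apply hp.
Qed.

Lemma union_extends (i : I) : extends (P i) union_pstr.
Proof. exists (fun w h => ex_intro _ i h); exact (to_union_hom i). Qed.

Lemma union_mem (K : StrClass L A) :
  iso_closed K -> union_closed K -> (forall i, K _ (pstr (P i))) -> K _ union_str.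
Proof.
  intros Kiso Kun KP.
  set (X := fun i (u : {w | union_dom w}) => pdom (P i) (proj1_sig u)).
  assert (HX : forall i, fclosed union_str (X i)).
  { intros i f args Hargs; unfold X.
    replace args with (fun k => to_union i (restrict_args i _ args Hargs k))
      by (extensionality k; apply proj1_sig_inj; reflexivity).
    rewrite <- (proj1 (to_union_hom i)); exact (proj2_sig (funI (pstr (P i)) f _)). }
  apply (Kun _ union_str I X HX (inhabits i0)).
  - intros i j; destruct (P_chain i j) as [[sub _]|[sub _]]; [left|right]; intro u; apply sub.
  - intros [w [i h]]; exists i; exact h.
  - intro i; apply (Kiso _ _ (pstr (P i))); [|exact (KP i)].
    apply (hom_isomorphic _ _ (fun x => exist (X i) (to_union i x) (proj2_sig x))).
    + split; [intros f args; apply proj1_sig_inj|intros Q args]; simpl.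
      * apply (proj1 (to_union_hom i)).
      * apply (proj2 (to_union_hom i)).
    + intros x y E; apply proj1_sig_inj; exact (f_equal (fun z => proj1_sig (proj1_sig z)) E).
    + intros [[w Hw] Xw]; exists (exist _ w Xw); apply proj1_sig_inj, proj1_sig_inj; reflexivity.
Qed.

End ChainUnion.
End PartialStructures.

Section UniversalMember.
Context {L : Language} {A : ULAlgebra} (K : StrClass L A).
Hypotheses (Kiso : iso_closed K) (Khp : HP K) (Kjep : JEP K) (Kun : union_closed K).

(* Finitely generated structures inject into [term L], so every finitely generated
   member of K is isomorphic to some [Rep]: the [Rep]s form a set of representatives. *)
Record Rep := {
  rep_dom : term L -> Prop;
  rep_str : AStr L A {t | rep_dom t};
  rep_mem : K _ rep_str
}.

Definition rep_car (r : Rep) : Type := {t | rep_dom r t}.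

Lemma fin_generated_represented {B : Type} (SB : AStr L A B) :
  K B SB -> fin_generated SB -> exists (r : Rep) (e : B -> rep_car r), embedding SB (rep_str r) e.
Proof.
  intros KB fgB; destruct (fin_generated_term_injection SB fgB) as [j j_inj].
  exists {| rep_mem := Kiso _ _ _ _ (transport_isomorphic SB j j_inj) KB |}, (to_image j).
  apply hom_embedding; [apply transport_hom|apply to_image_injective]; exact j_inj.
Qed.

Definition Var : Type := {r : Rep & rep_car r}.
Definition Name : Type := vterm L Var.

Record Cand := {
  cand_reps : Rep -> Prop;
  cand_pstr :> PStr L A Name;
  cand_name : Var -> Name
}.

Definition cand_assign (c : Cand) (v : Var) (x : pcar c) : Prop :=
  cand_reps c (projT1 v) /\ proj1_sig x = cand_name c v.

Definition names_embedding (c : Cand) (r : Rep) : Prop :=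
  exists e : rep_car r -> pcar c, embedding (rep_str r) (pstr c) e /\
    forall a, proj1_sig (e a) = cand_name c (existT _ r a).

(* Each element is named by a term that denotes it; this keeps the names of the
   elements added by an extension distinct from the old ones. *)
Definition admissible (c : Cand) : Prop :=
  K _ (pstr c) /\ (exists w, pdom c w) /\
  (forall x : pcar c, denotes (pstr c) (cand_assign c) (proj1_sig x) x) /\
  (forall r, cand_reps c r -> names_embedding c r).

Definition cand_le (c d : Cand) : Prop :=
  extends c d /\ (forall r, cand_reps c r -> cand_reps d r) /\
  (forall v, cand_reps c (projT1 v) -> cand_name d v = cand_name c v).

Lemma cand_le_refl (c : Cand) : cand_le c c.
Proof. split; [apply extends_refl|split; auto]. Qed.

Lemma cand_le_trans (c d e : Cand) : cand_le c d -> cand_le d e -> cand_le c e.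
Proof.
  intros (cd & rcd & ncd) (de & rde & nde); split; [exact (extends_trans _ _ _ cd de)|split].
  - auto.
  - intros v h; rewrite nde, ncd; auto.
Qed.

Lemma admissible_exists :
  (exists M (SM : AStr L A M), K M SM /\ inhabited M) -> exists c, admissible c.
Proof.
  intros (M & SM & KM & [m]).
  set (X := closure SM (fun x => x = m)).
  assert (fgX : fin_generated (subS SM X (closure_fclosed SM _))).
  { apply fin_generated_closure; exists (m :: nil); intros x ->; left; reflexivity. }
  destruct (fin_generated_represented _ (Khp _ _ _ _ KM) fgX) as (r & e & _).
  set (j := fun a : rep_car r => @vvar L Var (existT _ r a)).
  assert (j_inj : Injective j)
    by (intros a b h; injection h; intro h'; apply inj_pair2 in h'; exact h').
  exists {| cand_reps := fun r' => r' = r;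
            cand_pstr := {| pdom := image j; pstr := transport (rep_str r) j |};
            cand_name := vvar |}.
  split; [|split; [|split]]; simpl.
  - exact (Kiso _ _ _ _ (transport_isomorphic _ j j_inj) (rep_mem r)).
  - exists (j (e (exist X m (closure_base SM _ m eq_refl)))); eexists; reflexivity.
  - intros [w [a <-]]; apply denotes_var; split; reflexivity.
  - intros r' ->; exists (to_image j); split; [|reflexivity].
    apply hom_embedding; [apply transport_hom|apply to_image_injective]; exact j_inj.
Qed.

Section ChainUpperBound.
Variables (Ch : {c | admissible c} -> Prop) (c0 : {c | admissible c}) (Hc0 : Ch c0).
Hypothesis Ch_total : forall c d, Ch c -> Ch d ->
  cand_le (proj1_sig c) (proj1_sig d) \/ cand_le (proj1_sig d) (proj1_sig c).

Let I : Type := {c | Ch c}.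
Let member (i : I) : Cand := proj1_sig (proj1_sig i).

Lemma member_admissible (i : I) : admissible (member i).
Proof. exact (proj2_sig (proj1_sig i)). Qed.

Lemma members_chain (i j : I) : extends (member i) (member j) \/ extends (member j) (member i).
Proof.
  destruct i as [c Hc], j as [d Hd].
  destruct (Ch_total c d Hc Hd) as [[h _]|[h _]]; [left|right]; exact h.
Qed.

Lemma members_names_agree (i j : I) (v : Var) :
  cand_reps (member i) (projT1 v) -> cand_reps (member j) (projT1 v) ->
  cand_name (member i) v = cand_name (member j) v.
Proof.
  destruct i as [c Hc], j as [d Hd]; simpl; intros hc hd.
  destruct (Ch_total c d Hc Hd) as [(_ & _ & n)|(_ & _ & n)]; [symmetry|]; apply n; assumption.
Qed.

(* Variables of unrepresented [Rep]s get the junk name [vvar v]. *)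
Definition chain_name (v : Var) : Name :=
  match excluded_middle_informative (exists i, cand_reps (member i) (projT1 v)) with
  | left H => cand_name (member (choose H)) v
  | right _ => vvar v
  end.

Lemma chain_name_spec (i : I) (v : Var) :
  cand_reps (member i) (projT1 v) -> chain_name v = cand_name (member i) v.
Proof.
  intro h; unfold chain_name; destruct (excluded_middle_informative _) as [H|H].
  - apply members_names_agree; [exact (choose_spec H)|exact h].
  - destruct H; exists i; exact h.
Qed.

Let i0 : I := exist _ c0 Hc0.

Definition chain_cand : Cand :=
  {| cand_reps := fun r => exists i, cand_reps (member i) r;
     cand_pstr := union_pstr I member i0 members_chain;
     cand_name := chain_name |}.

Lemma chain_cand_upper (i : I) : cand_le (member i) chain_cand.
Proof.
  split; [exact (union_extends I member i0 members_chain i)|split].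
  - intros r h; exists i; exact h.
  - intros v h; apply chain_name_spec, h.
Qed.

Lemma chain_cand_admissible : admissible chain_cand.
Proof.
  pose proof (to_union_hom I member i0 members_chain) as to_union_hom.
  split; [|split; [|split]].
  - apply (union_mem I member i0 members_chain K Kiso Kun).
    intro i; exact (proj1 (member_admissible i)).
  - destruct (proj1 (proj2 (member_admissible i0))) as [w h]; exists w, i0; exact h.
  - intros [w [i h]].
    change (denotes (pstr chain_cand) (cand_assign chain_cand) w
                    (to_union I member i (exist _ w h))).
    apply (denotes_map (pstr (member i)) _ (cand_assign (member i))); [apply (to_union_hom i)| |].
    + intros v y [hr hy]; split; [exists i; exact hr|simpl; rewrite hy; symmetry].
      apply chain_name_spec, hr.
    + exact (proj1 (proj2 (proj2 (member_admissible i))) (exist _ w h)).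
  - intros r [i hr].
    destruct (proj2 (proj2 (proj2 (member_admissible i))) r hr) as (e & He & e_name).
    exists (fun a => to_union I member i (e a)); split.
    + apply (embedding_comp _ _ _ _ _ He), hom_embedding; [apply to_union_hom|].
      intros x y E; apply proj1_sig_inj; exact (f_equal (@proj1_sig _ _) E).
    + intro a; simpl; rewrite e_name; symmetry; apply chain_name_spec, hr.
Qed.

Lemma chain_upper_bound :
  exists u : {c | admissible c}, forall c, Ch c -> cand_le (proj1_sig c) (proj1_sig u).
Proof.
  exists (exist _ chain_cand chain_cand_admissible); intros c Hc.
  exact (chain_cand_upper (exist _ c Hc)).
Qed.

End ChainUpperBound.

Section Extension.
Variables (c : Cand) (c_adm : admissible c) (r : Rep) (r_new : ~ cand_reps c r)
  (M : Type) (SM : AStr L A M) (e1 : pcar c -> M) (e2 : rep_car r -> M)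
  (KM : K M SM) (e1_emb : embedding (pstr c) SM e1) (e2_emb : embedding (rep_str r) SM e2).

Let G : M -> Prop := closure SM (fun y => image e1 y \/ image e2 y).
Let SG : AStr L A {y | G y} := subS SM G (closure_fclosed SM _).
Let e1' (x : pcar c) : {y | G y} :=
  exist G (e1 x) (closure_base SM _ _ (or_introl (ex_intro _ x eq_refl))).
Let e2' (a : rep_car r) : {y | G y} :=
  exist G (e2 a) (closure_base SM _ _ (or_intror (ex_intro _ a eq_refl))).

Lemma e1'_embedding : embedding (pstr c) SG e1'.
Proof. exact (embedding_corestrict _ _ e1 G _ _ e1_emb). Qed.

Lemma e2'_embedding : embedding (rep_str r) SG e2'.
Proof. exact (embedding_corestrict _ _ e2 G _ _ e2_emb). Qed.

Definition ext_assign (v : Var) (y : {y | G y}) : Prop :=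
  (exists x, cand_assign c v x /\ y = e1' x) \/ (exists a, v = existT _ r a /\ y = e2' a).

Lemma ext_assign_functional (v : Var) (y y' : {y | G y}) :
  ext_assign v y -> ext_assign v y' -> y = y'.
Proof.
  intros [(x & [hr hx] & ->)|(a & -> & ->)] [(x' & [hr' hx'] & ->)|(a' & E & ->)].
  - f_equal; apply proj1_sig_inj; congruence.
  - subst v; destruct (r_new hr).
  - destruct (r_new hr').
  - apply inj_pair2 in E; subst; reflexivity.
Qed.

Lemma denotes_e1' (x : pcar c) : denotes SG ext_assign (proj1_sig x) (e1' x).
Proof.
  apply (denotes_map (pstr c) _ (cand_assign c)); [apply e1'_embedding| |].
  - intros v y hy; left; exists y; auto.
  - exact (proj1 (proj2 (proj2 c_adm)) x).
Qed.

Lemma ext_denoted (y : {y | G y}) : exists t, denotes SG ext_assign t y.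
Proof.
  destruct y as [y Gy]; pose proof Gy as Hy; revert Gy.
  induction Hy as [y [[x <-]|[a <-]]|f args Hargs IH]; intro Gy.
  - exists (proj1_sig x).
    match goal with |- denotes _ _ _ ?z =>
      replace z with (e1' x) by (apply proj1_sig_inj; reflexivity) end.
    apply denotes_e1'.
  - exists (vvar (existT _ r a)); apply denotes_var; right; exists a; split; [reflexivity|].
    apply proj1_sig_inj; reflexivity.
  - exists (vapp f (fun i => choose (IH i (Hargs i)))).
    match goal with |- denotes _ _ _ ?z =>
      replace z with (funI SG f (fun i => exist G (args i) (Hargs i)))
        by (apply proj1_sig_inj; reflexivity) end.
    apply denotes_app; intro i; exact (choose_spec (IH i (Hargs i))).
Qed.

Lemma ext_label_exists (y : {y | G y}) :
  exists t, denotes SG ext_assign t y /\ forall x, y = e1' x -> t = proj1_sig x.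
Proof.
  destruct (classic (exists x, y = e1' x)) as [[x ->]|new].
  - exists (proj1_sig x); split; [apply denotes_e1'|].
    intros x' E; f_equal; apply (proj1 e1'_embedding), E.
  - destruct (ext_denoted y) as [t Ht]; exists t; split; [exact Ht|].
    intros x E; destruct new; exists x; exact E.
Qed.

Definition ext_label (y : {y | G y}) : Name := choose (ext_label_exists y).

Lemma ext_label_denotes (y : {y | G y}) : denotes SG ext_assign (ext_label y) y.
Proof. exact (proj1 (choose_spec (ext_label_exists y))). Qed.

Lemma ext_label_e1' (x : pcar c) : ext_label (e1' x) = proj1_sig x.
Proof. exact (proj2 (choose_spec (ext_label_exists (e1' x))) x eq_refl). Qed.

Lemma ext_label_injective : Injective ext_label.
Proof.
  intros y y' E; apply (denotes_functional SG ext_assign ext_assign_functional (ext_label y)).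
  - apply ext_label_denotes.
  - rewrite E; apply ext_label_denotes.
Qed.

Definition ext_name (v : Var) : Name :=
  match excluded_middle_informative (exists a, v = existT _ r a) with
  | left H => ext_label (e2' (choose H))
  | right _ => cand_name c v
  end.

Lemma ext_name_new (a : rep_car r) : ext_name (existT _ r a) = ext_label (e2' a).
Proof.
  unfold ext_name; destruct (excluded_middle_informative _) as [H|H].
  - pose proof (choose_spec H) as E; apply inj_pair2 in E; rewrite <- E; reflexivity.
  - destruct H; exists a; reflexivity.
Qed.

Lemma ext_name_old (v : Var) : cand_reps c (projT1 v) -> ext_name v = cand_name c v.
Proof.
  intro hv; unfold ext_name; destruct (excluded_middle_informative _) as [[a ->]|_]; [|reflexivity].
  contradiction.
Qed.

Definition ext_cand : Cand :=
  {| cand_reps := fun r' => cand_reps c r' \/ r' = r;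
     cand_pstr := {| pdom := image ext_label; pstr := transport SG ext_label |};
     cand_name := ext_name |}.

Lemma ext_cand_admissible : admissible ext_cand.
Proof.
  destruct c_adm as (_ & [w0 h0] & _ & c_names).
  pose proof (transport_hom SG ext_label ext_label_injective) as to_image_hom.
  split; [|split; [|split]]; simpl.
  - exact (Kiso _ _ _ _ (transport_isomorphic SG _ ext_label_injective) (Khp _ _ _ _ KM)).
  - exists (ext_label (e1' (exist _ w0 h0))); eexists; reflexivity.
  - intros [w [y <-]].
    apply (denotes_map SG _ ext_assign _ (to_image ext_label)); [apply to_image_hom| |].
    + intros v y' [(x & [hr hx] & ->)|(a & -> & ->)]; split; simpl.
      * left; exact hr.
      * rewrite ext_label_e1', hx; symmetry; apply ext_name_old, hr.
      * right; reflexivity.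
      * symmetry; apply ext_name_new.
    + apply ext_label_denotes.
  - intros r' [hr| ->].
    + destruct (c_names r' hr) as (e & He & e_name).
      exists (fun a => to_image ext_label (e1' (e a))); split.
      * apply (embedding_comp _ _ _ e (fun x => to_image ext_label (e1' x)) He).
        apply (embedding_comp _ _ _ e1' (to_image ext_label) e1'_embedding).
        apply hom_embedding; [exact to_image_hom|apply to_image_injective, ext_label_injective].
      * intro a; simpl; rewrite ext_label_e1', e_name; symmetry; apply ext_name_old, hr.
    + exists (fun a => to_image ext_label (e2' a)); split.
      * apply (embedding_comp _ _ _ e2' (to_image ext_label) e2'_embedding).
        apply hom_embedding; [exact to_image_hom|apply to_image_injective, ext_label_injective].
      * intro a; simpl; symmetry; apply ext_name_new.
Qed.

Lemma ext_cand_extends : cand_le c ext_cand.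
Proof.
  destruct c_adm as (_ & [w0 h0] & _).
  assert (sub : forall w, pdom c w -> image ext_label w)
    by (intros w h; exists (e1' (exist _ w h)); apply ext_label_e1').
  split; [exists sub|split; [intros r' h; left; exact h|intros v h; apply ext_name_old, h]].
  apply (hom_ext _ _ (fun x => to_image ext_label (e1' x)));
    [intro x; apply proj1_sig_inj, ext_label_e1'|].
  apply (hom_comp (pstr c) SG _ e1' (to_image ext_label)).
  - apply embedding_hom; [exact e1'_embedding|exact (inhabits (exist _ w0 h0))].
  - apply transport_hom, ext_label_injective.
Qed.

End Extension.

Lemma extension (c : Cand) (r : Rep) :
  admissible c -> ~ cand_reps c r -> exists d, admissible d /\ cand_le c d /\ cand_reps d r.
Proof.
  intros c_adm r_new.
  destruct (Kjep _ _ (pstr c) (rep_str r) (proj1 c_adm) (rep_mem r))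
    as (M & SM & e1 & e2 & KM & e1_emb & e2_emb).
  exists (ext_cand c c_adm r M SM e1 e2 e1_emb); split; [|split].
  - exact (ext_cand_admissible c c_adm r r_new M SM e1 e2 KM e1_emb e2_emb).
  - exact (ext_cand_extends c c_adm r r_new M SM e1 e2 e1_emb).
  - right; reflexivity.
Qed.

Lemma maximal_admissible :
  (exists M (SM : AStr L A M), K M SM /\ inhabited M) ->
  exists c, admissible c /\ forall r, cand_reps c r.
Proof.
  intro K_inhabited; destruct (admissible_exists K_inhabited) as [c0 c0_adm].
  destruct (ChoicePrinciples.zorn_preorder {c | admissible c} (exist _ c0 c0_adm)
              (fun c d => cand_le (proj1_sig c) (proj1_sig d))) as [[m m_adm] m_max].
  - intro c; apply cand_le_refl.
  - intros c d e; apply cand_le_trans.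
  - intros Ch Ch_total; destruct (classic (exists c, Ch c)) as [[c Hc]|Ch_empty].
    + exact (chain_upper_bound Ch c Hc Ch_total).
    + exists (exist _ c0 c0_adm); intros c Hc; destruct Ch_empty; exists c; exact Hc.
  - exists m; split; [exact m_adm|intro r; apply NNPP; intro r_new].
    destruct (extension m r m_adm r_new) as (d & d_adm & md & dr).
    apply r_new, (m_max (exist _ d d_adm) md), dr.
Qed.

Theorem weakly_universal_member :
  (exists M (SM : AStr L A M), K M SM) ->
  exists N (SN : AStr L A N), K N SN /\
    forall B (SB : AStr L A B), K B SB -> fin_generated SB -> exists e, embedding SB SN e.
Proof.
  intros (M0 & S0 & K0).
  destruct (classic (exists M (SM : AStr L A M), K M SM /\ inhabited M))
    as [K_inhabited|K_empty].
  - destruct (maximal_admissible K_inhabited) as (m & (Km & _ & _ & m_names) & m_full).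
    exists (pcar m), (pstr m); split; [exact Km|]; intros B SB KB fgB.
    destruct (fin_generated_represented SB KB fgB) as (r & e & He).
    destruct (m_names r (m_full r)) as (e' & He' & _).
    exists (fun b => e' (e b)); exact (embedding_comp _ _ _ _ _ He He').
  - exists M0, S0; split; [exact K0|]; intros B SB KB _.
    assert (B_empty : ~ inhabited B) by (intro; apply K_empty; exists B, SB; auto).
    eexists; apply (empty_embedding SB S0 B_empty).
Qed.

End UniversalMember.

Theorem corollary1 (A : ULAlgebra) (L : Language) (K : StrClass L A) :
  UL_chain A ->
  (exists (M0 : Type) (S0 : AStr L A M0), K M0 S0) ->
  iso_closed K ->
  HP K -> JEP K -> union_closed K ->
  exists (N : Type) (SN : AStr L A N),
    forall (M : Type) (SM : AStr L A M), K M SM <-> age_sub SM SN.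
Proof.
  intros _ K_nonempty Kiso Khp Kjep Kun.
  destruct (weakly_universal_member K Kiso Khp Kjep Kun K_nonempty) as (N & SN & KN & univ).
  exists N, SN; intros M SM; split.
  - intros KM B SB HB.
    pose proof (inAge_fin_generated SM SB HB) as fgB.
    destruct (univ B SB (inAge_mem K SM SB Kiso Khp KM HB) fgB) as [e He].
    exact (inAge_of_embedding SN SB e He fgB).
  - intro age_le; apply (mem_of_fin_generated_substructures K Kiso Kun SM).
    intros X HX fgX.
    exact (inAge_mem K SN _ Kiso Khp KN (age_le _ _ (inAge_fin_generated_subS SM X HX fgX))).
Qed.
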